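(* Let $\mathcal{G}_R$ be the class of all finite reflexive graphs and let $G\in\mathcal{G}_R$. The class $\mathrm{Av}(G)=\{H\in\mathcal{G}_R: G\not\preceq H\}$, with respect to the homomorphic image ordering $\preceq$, is well quasi-ordered if and only if $G$ is isomorphic to $N_{n,k}$ for some natural numbers $n,k$ with $2k<n$.
   Context: A reflexive graph is a set with a symmetric edge relation having a loop at every vertex. A homomorphism maps edges to edges (and may collapse edges or non-edges to single vertices). Homomorphic image ordering: $A\preceq B$ iff there is a surjective homomorphism $B\to A$. For $2k\le n$, $N_{n,k}$ is the reflexive graph on $\{1,\dots,n\}$ with all pairs of distinct vertices adjacent except $\{1,2\},\{3,4\},\dots,\{2k-1,2k\}$ (obtained from $K_n$ by deleting $k$ disjoint edges). Well quasi-ordered means no infinite strictly decreasing sequence and no infinite antichain; graphs considered up to isomorphism. *)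

From mathcomp Require Import all_boot.
Set Implicit Arguments. Unset Strict Implicit. Unset Printing Implicit Defensive.

Record RGraph := MkRGraph {
  gsize : nat;
  gadj : rel 'I_gsize;
  gsym : symmetric gadj;
  grefl : reflexive gadj }.

Arguments gadj : clear implicits.
Definition is_hom (A B : RGraph) (f : 'I_(gsize A) -> 'I_(gsize B)) : Prop :=
  forall x y, gadj A x y -> gadj B (f x) (f y).

Definition himg_le (A B : RGraph) : Prop :=
  exists f : 'I_(gsize B) -> 'I_(gsize A),
    is_hom (A:=B) (B:=A) f /\ (forall y, exists x, f x = y).

Definition himg_lt (A B : RGraph) : Prop := himg_le A B /\ ~ himg_le B A.

Definition giso (A B : RGraph) : Prop :=
  exists f : 'I_(gsize A) -> 'I_(gsize B),
    bijective f /\ (forall x y, gadj B (f x) (f y) = gadj A x y).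

Definition Av (G : RGraph) (H : RGraph) : Prop := ~ himg_le G H.

Definition wqo_class (P : RGraph -> Prop) : Prop :=
  (~ exists s : nat -> RGraph,
       (forall i, P (s i)) /\ (forall i, himg_lt (s i.+1) (s i))) /\
  (~ exists s : nat -> RGraph,
       (forall i, P (s i)) /\
       (forall i j, i <> j -> ~ himg_le (s i) (s j))).

(* N_{n,k}: K_n on {0..n-1} minus the edges {2i,2i+1}, i < k
   (0-indexed version of {1,2},...,{2k-1,2k}). *)
Definition Nadj (n k : nat) : rel 'I_n :=
  fun x y => (x == y) || ~~ ((x./2 == y./2) && (x./2 < k)).

Arguments Nadj : clear implicits.

Lemma Nadj_sym n k : symmetric (Nadj n k).
Proof.
move=> x y; rewrite /Nadj [y == x]eq_sym [y./2 == _]eq_sym.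
by case: (x./2 =P y./2) => [->|]; rewrite ?andbF ?andbT.
Qed.

Lemma Nadj_refl n k : reflexive (Nadj n k).
Proof. by move=> x; rewrite /Nadj eqxx. Qed.

Definition Ngraph (n k : nat) : RGraph := MkRGraph (@Nadj_sym n k) (@Nadj_refl n k).

From mathcomp Require Import all_boot zify.
From Stdlib Require Import Classical ClassicalEpsilon.
Set Implicit Arguments. Unset Strict Implicit. Unset Printing Implicit Defensive.

(* A surjective homomorphism between graphs with the same number of vertices is a
   bijection that can only add edges, so a strict homomorphic image has fewer
   vertices, or as many vertices and more edges: there is no infinite descending
   chain.

   If G is N_{n,k} with 2k < n, every H avoiding G has a set S of fewer than n
   vertices outside which H is a clique: if H has at least n vertices, a maximal
   family of disjoint non-edges has fewer than k members, since otherwise H maps onto N_{n,k} (k of the non-edges onto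
   the k non-edges, everything else onto the universal vertices of N_{n,k}). Up to the
   homomorphic image order, such an H is then described by the graph on S, the
   neighbourhoods in S of the other vertices, and the number of vertices with each
   neighbourhood; Dickson's lemma on these numbers excludes infinite antichains.

   Conversely, a graph that maps onto the cocktail party graph K_{2m} minus a perfect
   matching inherits "at most one non-neighbour per vertex", and if it has fewer than
   2m vertices it must have a universal vertex (otherwise the surjection would be
   injective); such graphs are exactly the N_{n,k}
   with 2k < n. So for any other G, the cocktail party graphs with 2m > |G| form an
   infinite antichain avoiding G. *)

Section FinSurjection.
Variables (T T' : finType) (f : T -> T').
Hypothesis f_surj : forall y, exists x, f x = y.

Lemma surj_codom : codom f =i T'.
Proof. by move=> y; have [x <-] := f_surj y; rewrite codom_f. Qed.

Lemma leq_card_surj : #|T'| <= #|T|.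
Proof. by rewrite -(eq_card surj_codom) leq_image_card. Qed.

Lemma surj_card_inj : #|T| <= #|T'| -> injective f.
Proof.
move=> le_TT'; have /image_injP inj_f : #|codom f| == #|T|.
  by rewrite (eq_card surj_codom) eqn_leq le_TT' leq_card_surj.
by move=> x y; apply: inj_f.
Qed.
End FinSurjection.

Lemma himg_le_trans A B C : himg_le A B -> himg_le B C -> himg_le A C.
Proof.
move=> [f [hom_f surj_f]] [g [hom_g surj_g]]; exists (f \o g); split.
  by move=> x y /hom_g /hom_f.
by move=> y; have [x <-] := surj_f y; have [z <-] := surj_g x; exists z.
Qed.

Lemma himg_le_gsize A B : himg_le A B -> gsize A <= gsize B.
Proof. by move=> [f [_ /leq_card_surj]]; rewrite !card_ord. Qed.

Lemma giso_himg_le A B : giso A B -> himg_le A B.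
Proof.
move=> [f [[g fK gK] adj_f]]; exists g; split; first by move=> x y; rewrite -adj_f !gK.
by move=> y; exists (f y); rewrite fK.
Qed.

Definition paired (k i j : nat) : bool := [&& i != j, i./2 == j./2 & i./2 < k].

Definition mate (i : nat) : nat := if odd i then i.-1 else i.+1.

Lemma half_mate i : (mate i)./2 = i./2.
Proof. by rewrite /mate; case: ifP => odd_i; lia. Qed.

Lemma paired_mate k i : i./2 < k -> paired k i (mate i).
Proof. by rewrite /paired half_mate eqxx /= => ->; rewrite andbT /mate; case: ifP; lia. Qed.

Lemma paired_sym k i j : paired k i j = paired k j i.
Proof. by rewrite /paired; apply/idP/idP; lia. Qed.

Lemma Nadj_paired n k (x y : 'I_n) : Nadj n k x y = ~~ paired k x y.
Proof. by rewrite /Nadj /paired -val_eqE; case: eqP. Qed.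

Section FlattenPairs.
Variable T : Type.

Definition flatten_pairs (P : seq (T * T)) : seq T :=
  flatten [seq [:: p.1; p.2] | p <- P].

Lemma flatten_pairs_cat P Q :
  flatten_pairs (P ++ Q) = flatten_pairs P ++ flatten_pairs Q.
Proof. by rewrite /flatten_pairs map_cat flatten_cat. Qed.

Lemma size_flatten_pairs P : size (flatten_pairs P) = 2 * size P.
Proof. by elim: P => //= p P IH; rewrite IH; lia. Qed.

Lemma nth_flatten_pairs x0 P i : i./2 < size P ->
  nth x0 (flatten_pairs P) i =
  (if odd i then (nth (x0, x0) P i./2).2 else (nth (x0, x0) P i./2).1).
Proof.
elim: P i => // p P IH [|[|i]] //= lt_i.
by rewrite IH // negbK.
Qed.
End FlattenPairs.

Section Matching.
Variable H : RGraph.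
Local Notation V := 'I_(gsize H).
Local Notation adj := (gadj H).

Definition nonadj_matching (P : seq (V * V)) : bool :=
  uniq (flatten_pairs P) && all (fun p => ~~ adj p.1 p.2) P.

Definition clique_outside (S : seq V) : Prop :=
  forall x y, x \notin S -> y \notin S -> adj x y.

Lemma nonadj_matching_take P k : nonadj_matching P -> nonadj_matching (take k P).
Proof.
case/andP; rewrite -{1 2}(cat_take_drop k P) flatten_pairs_cat all_cat cat_uniq.
by case/and3P=> uniq_take _ _ /andP [nonadj_take _]; apply/andP.
Qed.

Lemma size_flatten_matching P : nonadj_matching P -> size (flatten_pairs P) <= gsize H.
Proof.
case/andP=> uniq_P _; have := uniq_leq_size uniq_P (fun v _ => mem_enum V v).
by rewrite size_enum_ord.
Qed.

Lemma nonadj_matching_cons P x y :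
  nonadj_matching P -> x \notin flatten_pairs P -> y \notin flatten_pairs P ->
  ~~ adj x y -> nonadj_matching ((x, y) :: P).
Proof.
case/andP=> uniq_P nonadj_P x_out y_out nadj_xy; rewrite /nonadj_matching /=.
rewrite nadj_xy nonadj_P in_cons negb_or x_out y_out uniq_P !andbT /=.
by apply: contraNneq nadj_xy => ->; rewrite grefl.
Qed.

Lemma clique_outsideP (S : seq V) :
  clique_outside S \/ exists x y, [/\ x \notin S, y \notin S & ~~ adj x y].
Proof.
have [/forallP clique_S | /forallPn [x /forallPn [y]]] :=
  boolP [forall x, forall y, (x \notin S) ==> (y \notin S) ==> adj x y].
  by left=> x y x_out y_out; move/forallP: (clique_S x) => /(_ y); rewrite x_out y_out.
by rewrite !negb_imply => /and3P [x_out y_out nadj_xy]; right; exists x, y.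
Qed.

Lemma exists_maximal_matching :
  exists2 P, nonadj_matching P & clique_outside (flatten_pairs P).
Proof.
suff: forall d P, nonadj_matching P -> gsize H - size (flatten_pairs P) <= d ->
    exists2 P', nonadj_matching P' & clique_outside (flatten_pairs P').
  by move/(_ (gsize H) [::]); apply=> //=; rewrite subn0.
elim=> [|d IH] P match_P le_d; have [clique_P | [x [y [x_out y_out nadj_xy]]]] :=
  clique_outsideP (flatten_pairs P); try by exists P.
all: have match_xyP := nonadj_matching_cons match_P x_out y_out nadj_xy.
all: have := size_flatten_matching match_xyP.
all: rewrite !size_flatten_pairs /= in le_d * => bound_xyP.
  by exfalso; lia.
by apply: (IH _ match_xyP); rewrite size_flatten_pairs /=; lia.
Qed.

Definition matching_order (P : seq (V * V)) : seq V :=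
  flatten_pairs P ++ [seq v <- enum V | v \notin flatten_pairs P].

Definition matching_pos (P : seq (V * V)) (v : V) : nat := index v (matching_order P).

Section MatchingOrder.
Variable P : seq (V * V).
Hypothesis match_P : nonadj_matching P.
Local Notation order := (matching_order P).
Local Notation pos := (matching_pos P).

Lemma matching_order_uniq : uniq order.
Proof.
case/andP: match_P => uniq_P _; rewrite cat_uniq uniq_P filter_uniq ?enum_uniq //.
by rewrite andbT; apply/hasPn => v; rewrite mem_filter => /andP [].
Qed.

Lemma mem_matching_order v : v \in order.
Proof. by rewrite mem_cat mem_filter mem_enum andbT; case: (v \in _). Qed.

Lemma size_matching_order : size order = gsize H.
Proof.
rewrite -(card_uniqP matching_order_uniq) -[RHS]card_ord.
by apply: eq_card => v; rewrite mem_matching_order.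
Qed.

Lemma matching_pos_lt v : pos v < gsize H.
Proof. by rewrite -size_matching_order index_mem mem_matching_order. Qed.

Lemma nth_matching_pos x0 v : nth x0 order (pos v) = v.
Proof. by rewrite nth_index ?mem_matching_order. Qed.

Lemma matching_pos_nth x0 i : i < gsize H -> pos (nth x0 order i) = i.
Proof.
by move=> lt_i; rewrite /matching_pos index_uniq ?size_matching_order ?matching_order_uniq.
Qed.

Lemma matching_pos_inj : injective pos.
Proof. by move=> x y eq_pos; rewrite -(nth_matching_pos x x) eq_pos nth_matching_pos. Qed.

Lemma matching_pos_matched v : (pos v < 2 * size P) = (v \in flatten_pairs P).
Proof.
rewrite -size_flatten_pairs /matching_pos index_cat.
by case: ifP => [v_in | _]; rewrite ?index_mem // ltnNge leq_addr.
Qed.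

Lemma nth_matching_order_matched x0 i :
  i < 2 * size P -> nth x0 order i = nth x0 (flatten_pairs P) i.
Proof. by rewrite -size_flatten_pairs => lt_i; rewrite nth_cat lt_i. Qed.

Lemma paired_matching_nonadj x y : paired (size P) (pos x) (pos y) -> ~~ adj x y.
Proof.
case/and3P=> neq_xy /eqP eq_half lt_half.
have [x_in y_in] : pos x < 2 * size P /\ pos y < 2 * size P by split; lia.
rewrite -(nth_matching_pos x x) -(nth_matching_pos x y).
rewrite !nth_matching_order_matched // !nth_flatten_pairs -?eq_half //.
case/andP: match_P => _ /allP /(_ _ (mem_nth (x, x) lt_half)) nadj_pair.
have -> : odd (pos x) = ~~ odd (pos y) by move: neq_xy eq_half; clear; lia.
by case: (odd (pos y)); last rewrite gsym.
Qed.

Lemma matched_nonadj_mate x :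
  x \in flatten_pairs P -> exists2 y, ~~ adj x y & paired (size P) (pos x) (pos y).
Proof.
rewrite -matching_pos_matched => x_in.
have paired_mate_x : paired (size P) (pos x) (mate (pos x)) by apply: paired_mate; lia.
have lt_mate : mate (pos x) < gsize H.
  have := size_flatten_matching match_P; rewrite size_flatten_pairs.
  by move: paired_mate_x; rewrite /paired; lia.
exists (nth x order (mate (pos x))); last by rewrite matching_pos_nth.
by apply: paired_matching_nonadj; rewrite matching_pos_nth.
Qed.
End MatchingOrder.
End Matching.

Lemma himg_le_Ngraph_matching n k H (P : seq ('I_(gsize H) * 'I_(gsize H))) :
  2 * k < n -> n <= gsize H -> nonadj_matching P -> k <= size P ->
  himg_le (Ngraph n k) H.
Proof.
move=> lt_kn le_nH /(nonadj_matching_take k) match_Pk le_kP.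
have size_Pk : size (take k P) = k by rewrite size_take_min; apply/minn_idPl.
set pos := matching_pos (take k P).
(* Clipping only merges vertices into [n - 1], which is universal in N_{n,k}. *)
have lt_clip v : minn (pos v) n.-1 < n by lia.
pose f v : 'I_n := Ordinal (lt_clip v).
exists f; split=> [x y adj_xy | [i lt_in]].
  rewrite /= Nadj_paired; apply: contraL adj_xy => /= paired_fxy.
  have unclipped : minn (pos x) n.-1 = pos x /\ minn (pos y) n.-1 = pos y.
    by move: paired_fxy; rewrite /paired; lia.
  apply: (paired_matching_nonadj match_Pk).
  by rewrite size_Pk -/(pos x) -/(pos y) -(proj1 unclipped) -(proj2 unclipped).
have lt_iH : i < gsize H by apply: leq_trans le_nH.
exists (nth (Ordinal lt_iH) (matching_order (take k P)) i); apply: val_inj => /=.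
by rewrite /pos matching_pos_nth //=; move: lt_in => /=; lia.
Qed.

Definition nonadj_unique (G : RGraph) : Prop :=
  forall u v w, ~~ gadj G u v -> ~~ gadj G u w -> v = w.

Lemma Ngraph_giso_nonadj_unique G :
  nonadj_unique G -> (exists u, forall v, gadj G u v) ->
  exists n k, 2 * k < n /\ giso G (Ngraph n k).
Proof.
move=> uniq_G [u univ_u]; have [P match_P clique_P] := exists_maximal_matching G.
set pos := matching_pos P.
have paired_nonadj x y : paired (size P) (pos x) (pos y) = ~~ gadj G x y.
  apply/idP/idP => [/(paired_matching_nonadj match_P) // | nadj_xy].
  have [x_in | x_out] := boolP (x \in flatten_pairs P).
    have [z nadj_xz] := matched_nonadj_mate match_P x_in.
    by rewrite (uniq_G _ _ _ nadj_xy nadj_xz).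
  have [y_in | y_out] := boolP (y \in flatten_pairs P).
    have [z nadj_yz] := matched_nonadj_mate match_P y_in.
    have nadj_yx : ~~ gadj G y x by rewrite gsym.
    by rewrite paired_sym (uniq_G _ _ _ nadj_yx nadj_yz).
  by rewrite clique_P in nadj_xy.
exists (gsize G), (size P); split.
  have : u \notin flatten_pairs P.
    by apply/negP => /(matched_nonadj_mate match_P) [v]; rewrite univ_u.
  rewrite -matching_pos_matched.
  by have := matching_pos_lt match_P u; lia.
exists (fun v => Ordinal (matching_pos_lt match_P v)); split.
  by apply: injF_bij => x y /(congr1 val) /matching_pos_inj.
by move=> x y; rewrite /= Nadj_paired paired_nonadj negbK.
Qed.

Lemma clique_outside_of_Ngraph_free n k H :
  2 * k < n -> ~ himg_le (Ngraph n k) H ->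
  exists S : seq 'I_(gsize H), [/\ uniq S, size S < n & clique_outside S].
Proof.
move=> lt_kn not_NH; have [lt_Hn | le_nH] := ltnP (gsize H) n.
  exists (enum 'I_(gsize H)); rewrite enum_uniq size_enum_ord.
  by split=> // x; rewrite mem_enum.
have [P match_P clique_P] := exists_maximal_matching H.
have [le_kP | lt_Pk] := leqP k (size P).
  by case: not_NH; apply: himg_le_Ngraph_matching match_P le_kP.
exists (flatten_pairs P); split=> //; first by case/andP: match_P.
by rewrite size_flatten_pairs; lia.
Qed.

Lemma nonadj_unique_himg_le G H : himg_le G H -> nonadj_unique H -> nonadj_unique G.
Proof.
move=> [f [hom_f surj_f]] uniq_H u v w.
have [a <-] := surj_f u; have [b <-] := surj_f v; have [c <-] := surj_f w.
have nadj_hom x y : ~~ gadj G (f x) (f y) -> ~~ gadj H x y by apply: contra => /hom_f.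
by move=> /nadj_hom nadj_ab /nadj_hom nadj_ac; rewrite (uniq_H _ _ _ nadj_ab nadj_ac).
Qed.

Lemma surj_hom_inj_nonadj_unique H G (f : 'I_(gsize H) -> 'I_(gsize G)) :
  is_hom f -> (forall y, exists x, f x = y) -> nonadj_unique H ->
  (forall u, exists v, ~~ gadj G u v) -> injective f.
Proof.
move=> hom_f surj_f uniq_H nonuniv_G x y eq_fxy.
have [w nadj_fxw] := nonuniv_G (f x); have [v fv] := surj_f w.
rewrite -fv in nadj_fxw.
have nadj_vx : ~~ gadj H v x by rewrite gsym; apply: contra nadj_fxw => /hom_f.
have nadj_vy : ~~ gadj H v y by rewrite gsym; apply: contra nadj_fxw => /hom_f; rewrite eq_fxy.
exact: uniq_H nadj_vx nadj_vy.
Qed.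

Definition cocktail_party (m : nat) : RGraph := Ngraph (2 * m) m.

Lemma cocktail_party_nonadj_unique m : nonadj_unique (cocktail_party m).
Proof.
move=> u v w; rewrite /= !Nadj_paired !negbK /paired => paired_uv paired_uw.
by apply: val_inj; move: paired_uv paired_uw => /=; lia.
Qed.

Lemma cocktail_party_nonadj m (u : 'I_(2 * m)) :
  exists v, ~~ gadj (cocktail_party m) u v.
Proof.
have lt_half : u./2 < m by have := ltn_ord u; lia.
have lt_mate : mate u < 2 * m by rewrite /mate; case: ifP; lia.
by exists (Ordinal lt_mate); rewrite /= Nadj_paired negbK paired_mate.
Qed.

Lemma cocktail_party_antichain i j :
  i <> j -> ~ himg_le (cocktail_party i) (cocktail_party j).
Proof.
move=> neq_ij [f [hom_f surj_f]].
have inj_f := surj_hom_inj_nonadj_unique hom_f surj_f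
  (@cocktail_party_nonadj_unique j) (@cocktail_party_nonadj i).
by have := leq_card f inj_f; have := leq_card_surj surj_f; rewrite !card_ord /=; lia.
Qed.

Lemma Ngraph_giso_of_himg_le_cocktail_party G m :
  himg_le G (cocktail_party m) -> gsize G < 2 * m ->
  exists n k, 2 * k < n /\ giso G (Ngraph n k).
Proof.
move=> le_G lt_G; apply: Ngraph_giso_nonadj_unique.
  exact: nonadj_unique_himg_le le_G (@cocktail_party_nonadj_unique m).
have [/existsP [u /forallP univ_u] | /existsPn nonuniv_G] :=
  boolP [exists u, [forall v, gadj G u v]]; first by exists u.
case: le_G => f [hom_f surj_f].
have inj_f : injective f.
  apply: surj_hom_inj_nonadj_unique hom_f surj_f (@cocktail_party_nonadj_unique m) _.
  by move=> u; have /forallPn [v] := nonuniv_G u; exists v.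
by have := leq_card f inj_f; rewrite !card_ord /=; lia.
Qed.

Lemma Ngraph_giso_of_wqo_Av G :
  wqo_class (Av G) -> exists n k, 2 * k < n /\ giso G (Ngraph n k).
Proof.
move=> [_ no_antichain]; apply: NNPP => not_N; apply: no_antichain.
exists (fun m => cocktail_party (m + gsize G).+1); split=> [m le_G | i j neq_ij].
  by apply: not_N; apply: Ngraph_giso_of_himg_le_cocktail_party le_G _; lia.
by apply: cocktail_party_antichain; lia.
Qed.

Definition edges (H : RGraph) : {set 'I_(gsize H) * 'I_(gsize H)} :=
  [set p | gadj H p.1 p.2].

Definition himg_rank (H : RGraph) : nat :=
  gsize H ^ 3 + (gsize H ^ 2 - #|edges H|).

Lemma card_edges_le H : #|edges H| <= gsize H ^ 2.
Proof. by rewrite (leq_trans (max_card _)) // card_prod card_ord. Qed.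

Section InjectiveHom.
Variables (A B : RGraph) (f : 'I_(gsize B) -> 'I_(gsize A)).
Hypotheses (hom_f : is_hom f) (inj_f : injective f).

Let f2 (p : 'I_(gsize B) * 'I_(gsize B)) := (f p.1, f p.2).

Let f2_edges : f2 @: edges B \subset edges A.
Proof. by apply/subsetP => q /imsetP [p]; rewrite inE => /hom_f adj_p ->; rewrite inE. Qed.

Let card_f2_edges : #|f2 @: edges B| = #|edges B|.
Proof. by apply: card_imset => -[x1 x2] [y1 y2] [/inj_f -> /inj_f ->]. Qed.

Lemma card_edges_inj_hom : #|edges B| <= #|edges A|.
Proof. by rewrite -card_f2_edges subset_leq_card. Qed.

Lemma himg_le_card_edges_eq :
  (forall y, exists x, f x = y) -> #|edges A| = #|edges B| -> himg_le B A.
Proof.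
move=> surj_f eq_edges; have [g fK] : exists g, cancel g f.
  by have /fin_all_exists [g fg] := surj_f; exists g.
have f2_edgesE : f2 @: edges B = edges A.
  by apply/eqP; rewrite eqEcard f2_edges card_f2_edges eq_edges /=.
have gK : cancel f g by move=> x; apply: inj_f; rewrite fK.
exists g; split; last by move=> x; exists (f x); rewrite gK.
move=> y1 y2 adj_y; have : (y1, y2) \in f2 @: edges B by rewrite f2_edgesE inE.
by case/imsetP=> -[x1 x2]; rewrite inE => adj_x [-> ->]; rewrite !gK.
Qed.
End InjectiveHom.

Lemma himg_lt_rank A B : himg_lt A B -> himg_rank A < himg_rank B.
Proof.
move=> [[f [hom_f surj_f]] not_BA]; rewrite /himg_rank.
have := card_edges_le A; have := card_edges_le B.
have := himg_le_gsize (ex_intro _ f (conj hom_f surj_f)).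
rewrite leq_eqVlt => /orP [/eqP eq_size | lt_size]; last first.
  have : (gsize A).+1 ^ 3 <= gsize B ^ 3 by rewrite leq_exp2r.
  rewrite !expnS expn0; nia.
have inj_f : injective f by apply: surj_card_inj surj_f _; rewrite !card_ord eq_size.
have := card_edges_inj_hom hom_f inj_f.
rewrite leq_eqVlt => /orP [/eqP eq_edges | lt_edges].
  by case: not_BA; apply: himg_le_card_edges_eq hom_f inj_f surj_f _.
have [-> ->] : gsize A ^ 3 = gsize B ^ 3 /\ gsize A ^ 2 = gsize B ^ 2 by rewrite eq_size.
lia.
Qed.

Lemma no_himg_descent (s : nat -> RGraph) : ~ (forall i, himg_lt (s i.+1) (s i)).
Proof.
move=> desc; have rank_desc i : himg_rank (s i) + i <= himg_rank (s 0).
  elim: i => [|i IH]; first by rewrite addn0.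
  by rewrite addnS (leq_trans _ IH) // ltn_add2r himg_lt_rank.
by have := rank_desc (himg_rank (s 0)).+1; lia.
Qed.

Lemma nat_tail_min (u : nat -> nat) N :
  exists i, N <= i /\ forall j, i <= j -> u i <= u j.
Proof.
suff tail_min : forall v i, N <= i -> u i <= v ->
    exists i, N <= i /\ forall j, i <= j -> u i <= u j.
  by apply: (tail_min (u N) N).
elim=> [|v IH] i le_Ni le_ui; first by exists i; split=> // j _; lia.
have [min_i | not_min_i] := classic (forall j, i <= j -> u i <= u j); first by exists i.
have [j not_min_ij] := not_all_ex_not _ _ not_min_i.
have [le_ij /negP] := imply_to_and _ _ not_min_ij.
by rewrite -ltnNge => lt_uji; apply: (IH j); lia.
Qed.

Lemma monotone_subsequence (u : nat -> nat) :
  exists2 phi : nat -> nat, {homo phi : a b / a < b} & {homo u \o phi : a b / a <= b}.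
Proof.
have [next next_spec] := ClassicalEpsilon.choice _ (nat_tail_min u).
pose fix phi a := if a is a'.+1 then next (phi a').+1 else next 0.
have phi_min a j : phi a <= j -> u (phi a) <= u j.
  by case: a => [|a] /=; apply: (proj2 (next_spec _)).
have phi_incr : {homo phi : a b / a < b}.
  by apply: homo_ltn ltn_trans _ => a; apply: (proj1 (next_spec _)).
by exists phi => // a b /(ltnW_homo phi_incr); apply: phi_min.
Qed.

Lemma dickson (I : finType) (w : nat -> I -> nat) :
  exists i j, i < j /\ forall t, w i t <= w j t.
Proof.
have [phi phi_incr phi_mono] : exists2 phi : nat -> nat, {homo phi : a b / a < b} &
    forall t, t \in enum I -> {homo (fun a => w (phi a) t) : a b / a <= b}.
  elim: (enum I) => [|t s [phi phi_incr phi_mono]]; first by exists id.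
  have [psi psi_incr psi_mono] := monotone_subsequence (fun a => w (phi a) t).
  exists (phi \o psi) => [a b /psi_incr /phi_incr // | t'].
  rewrite in_cons => /predU1P [-> // | t'_s] a b /(ltnW_homo psi_incr).
  exact: phi_mono.
exists (phi 0), (phi 1); split=> [|t]; first exact: phi_incr.
by apply: phi_mono; rewrite ?mem_enum.
Qed.

Lemma dickson_labelled (L I : finType) (lab : nat -> L) (w : nat -> I -> nat) :
  exists i j, [/\ i < j, lab i = lab j & forall t, w i t <= w j t].
Proof.
(* The label becomes extra coordinates: [inl l] has weight 1 exactly where [lab] is [l]. *)
pose w' i (x : L + I) : nat := if x is inr t then w i t else inl (lab i) == x.
have [i [j [lt_ij le_w']]] := dickson w'.
exists i, j; split=> // [|t]; last exact: le_w' (inr t).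
by have := le_w' (inl (lab i)); rewrite /w' eqxx; case: eqP => // [[]].
Qed.

Lemma onth_nth_default T (x0 : T) s i : i < size s -> onth s i = Some (nth x0 s i).
Proof. by move=> lt_i; rewrite onthE (nth_map x0). Qed.

Lemma exists_index (T : eqType) (s : seq T) i :
  uniq s -> i < size s -> exists2 x, x \in s & index x s = i.
Proof.
by case: s => // x0 s uniq_s lt_i; exists (nth x0 (x0 :: s) i); rewrite ?mem_nth ?index_uniq.
Qed.

Section CoverSignature.
Variables (n : nat) (H : RGraph) (S : seq 'I_(gsize H)).
Local Notation V := 'I_(gsize H).

Definition cover_adj : {ffun 'I_n * 'I_n -> bool} :=
  [ffun p : 'I_n * 'I_n =>
     if (onth S p.1, onth S p.2) is (Some x, Some y) then gadj H x y else false].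

Definition cover_type (v : V) : {set 'I_n} :=
  [set i : 'I_n | (i < size S) && gadj H v (nth v S i)].

Definition type_class (t : {set 'I_n}) : seq V :=
  [seq v <- enum V | (v \notin S) && (cover_type v == t)].

Definition type_support : {set {set 'I_n}} := [set t | type_class t != [::]].

Lemma type_class_uniq t : uniq (type_class t).
Proof. by rewrite filter_uniq ?enum_uniq. Qed.

Lemma mem_type_class t v : (v \in type_class t) = (v \notin S) && (cover_type v == t).
Proof. by rewrite mem_filter mem_enum andbT. Qed.

Lemma type_class_cover_type v : v \notin S -> v \in type_class (cover_type v).
Proof. by rewrite mem_type_class eqxx andbT. Qed.

Lemma cover_adj_nth x0 (i j : 'I_n) : i < size S -> j < size S ->
  cover_adj (i, j) = gadj H (nth x0 S i) (nth x0 S j).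
Proof. by move=> lt_i lt_j; rewrite ffunE /= !(onth_nth_default x0). Qed.
End CoverSignature.

Arguments cover_type n [H] S v.
Arguments type_class n [H] S t.

Section SignatureTransfer.
Variables (n : nat) (H H' : RGraph).
Variables (S : seq 'I_(gsize H)) (S' : seq 'I_(gsize H')).
Hypotheses (uniq_S' : uniq S') (size_S : size S <= n) (clique_S : clique_outside S).
Hypotheses (eq_size : size S = size S') (eq_adj : cover_adj n S = cover_adj n S').
Hypothesis eq_support : type_support n S = type_support n S'.
Hypothesis le_count : forall t, size (type_class n S t) <= size (type_class n S' t).
Local Notation V := 'I_(gsize H).
Local Notation V' := 'I_(gsize H').

Lemma type_class_transfer_neq0 v' :
  v' \notin S' -> type_class n S (cover_type n S' v') != [::].
Proof.
move=> v'_out; have : cover_type n S' v' \in type_support n S'.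
  rewrite inE; apply/eqP => class_nil.
  by move: (type_class_cover_type n v'_out); rewrite class_nil.
by rewrite -eq_support inE.
Qed.

Lemma gsize_pos_transfer : 0 < gsize H' -> 0 < gsize H.
Proof.
move=> pos_H'; pose v' : V' := Ordinal pos_H'.
have pos_of (v : V) : 0 < gsize H := leq_ltn_trans (leq0n v) (ltn_ord v).
have [v'_in | /type_class_transfer_neq0] := boolP (v' \in S').
  have : 0 < size S by rewrite eq_size; case: (S') v'_in.
  by case: (S) => // v _ _; apply: pos_of v.
by case: (type_class n S _) => // v _ _; apply: pos_of v.
Qed.

Variable x0 : 'I_(gsize H).

(* Outside the covers, the clamped index makes each type class of H' map onto the
   (no larger, nonempty) class of the same type in H. *)
Definition transfer (v' : V') : V :=
  let t := cover_type n S' v' in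
  if v' \in S' then nth x0 S (index v' S')
  else nth x0 (type_class n S t)
         (minn (index v' (type_class n S' t)) (size (type_class n S t)).-1).

Lemma transfer_in v' : v' \in S' -> transfer v' = nth x0 S (index v' S').
Proof. by rewrite /transfer => ->. Qed.

Lemma transfer_out v' : v' \notin S' -> transfer v' \in type_class n S (cover_type n S' v').
Proof.
move=> v'_out; rewrite /transfer (negbTE v'_out); apply: mem_nth.
by move: (type_class_transfer_neq0 v'_out); case: type_class => //= v s _; lia.
Qed.

Lemma transfer_in_out x' y' : x' \in S' -> y' \notin S' ->
  gadj H' x' y' -> gadj H (transfer x') (transfer y').
Proof.
move=> x'_in y'_out adj_xy'.
have lt_x'n : index x' S' < n by apply: leq_trans size_S; rewrite eq_size index_mem.
have := transfer_out y'_out; rewrite mem_type_class => /andP [_ /eqP type_y].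
have : Ordinal lt_x'n \in cover_type n S' y'.
  by rewrite inE /= index_mem x'_in nth_index // gsym.
rewrite -type_y inE /= => /andP [_]; rewrite gsym (set_nth_default x0) ?eq_size ?index_mem //.
by rewrite (transfer_in x'_in).
Qed.

Lemma transfer_in_in x' y' : x' \in S' -> y' \in S' ->
  gadj H (transfer x') (transfer y') = gadj H' x' y'.
Proof.
have lt_idx v' : v' \in S' -> index v' S' < n.
  by rewrite -index_mem -eq_size => /leq_trans; apply.
move=> x'_in y'_in; move/ffunP: eq_adj.
move/(_ (Ordinal (lt_idx _ x'_in), Ordinal (lt_idx _ y'_in))).
rewrite /= !transfer_in // !(cover_adj_nth x0) ?eq_size ?index_mem //.
by rewrite !(cover_adj_nth x') ?index_mem // !nth_index.
Qed.

Lemma transfer_hom : is_hom transfer.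
Proof.
move=> x' y' adj_xy'.
have [x'_in | x'_out] := boolP (x' \in S'); have [y'_in | y'_out] := boolP (y' \in S').
- by rewrite transfer_in_in.
- exact: transfer_in_out.
- by rewrite gsym; apply: transfer_in_out; rewrite // gsym.
- apply: clique_S.
  + by have := transfer_out x'_out; rewrite mem_type_class => /andP [].
  + by have := transfer_out y'_out; rewrite mem_type_class => /andP [].
Qed.

Lemma transfer_surj y : exists y', transfer y' = y.
Proof.
have [y_in | y_out] := boolP (y \in S).
  have lt_y : index y S < size S' by rewrite -eq_size index_mem.
  have [y' y'_in idx_y'] := exists_index uniq_S' lt_y.
  by exists y'; rewrite transfer_in // idx_y' nth_index.
set t := cover_type n S y.
have y_class : y \in type_class n S t := type_class_cover_type n y_out.
have lt_y : index y (type_class n S t) < size (type_class n S' t).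
  by apply: leq_trans (le_count t); rewrite index_mem.
have [y' y'_class idx_y'] := exists_index (type_class_uniq _ _) lt_y.
move: (y'_class); rewrite mem_type_class => /andP [y'_out /eqP type_y'].
exists y'; rewrite /transfer (negbTE y'_out) type_y' idx_y'.
have := y_class; rewrite -index_mem => lt_idx.
by rewrite (minn_idPl _) ?nth_index // -ltnS (ltn_predK lt_idx).
Qed.
End SignatureTransfer.

Lemma himg_le_of_cover_signature n H H' (S : seq 'I_(gsize H)) (S' : seq 'I_(gsize H')) :
  uniq S' -> size S <= n -> clique_outside S -> size S = size S' ->
  cover_adj n S = cover_adj n S' -> type_support n S = type_support n S' ->
  (forall t, size (type_class n S t) <= size (type_class n S' t)) -> himg_le H H'.
Proof.
move=> uniq_S' size_S clique_S eq_size eq_adj eq_support le_count.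
have [empty_H | pos_H] := posnP (gsize H); last first.
  exists (transfer n S S' (Ordinal pos_H)).
  by split; [apply: transfer_hom | apply: transfer_surj].
have no_vertex (v' : 'I_(gsize H')) : False.
  have := gsize_pos_transfer eq_size eq_support (leq_ltn_trans (leq0n v') (ltn_ord v')).
  by rewrite empty_H.
exists (fun v' => match no_vertex v' with end).
split=> [v' | v]; first by case: (no_vertex v').
by exfalso; case: v; rewrite empty_H.
Qed.

Lemma Ngraph_free_no_antichain n k : 2 * k < n ->
  ~ exists s : nat -> RGraph, (forall i, ~ himg_le (Ngraph n k) (s i)) /\
                             (forall i j, i <> j -> ~ himg_le (s i) (s j)).
Proof.
move=> lt_kn [s [free_s antichain_s]].
pose cover i := constructive_indefinite_description _
  (clique_outside_of_Ngraph_free lt_kn (free_s i)).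
pose S i := proj1_sig (cover i).
have S_spec i : [/\ uniq (S i), size (S i) < n & clique_outside (S i)] := proj2_sig (cover i).
pose lab i : 'I_n.+1 * {ffun 'I_n * 'I_n -> bool} * {set {set 'I_n}} :=
  (inord (size (S i)), cover_adj n (S i), type_support n (S i)).
have [i [j [lt_ij [eq_size eq_adj eq_support] le_count]]] :=
  dickson_labelled lab (fun i t => size (type_class n (S i) t)).
have [_ lt_Si clique_Si] := S_spec i; have [uniq_Sj lt_Sj _] := S_spec j.
apply: (antichain_s i j); first by move=> eq_ij; rewrite eq_ij ltnn in lt_ij.
apply: himg_le_of_cover_signature uniq_Sj (ltnW lt_Si) clique_Si _ eq_adj eq_support le_count.
by have := congr1 (@nat_of_ord n.+1) eq_size; rewrite !inordK // ltnS ltnW.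
Qed.

Lemma wqo_Av_Ngraph G n k : 2 * k < n -> giso G (Ngraph n k) -> wqo_class (Av G).
Proof.
move=> lt_kn iso_G; split=> [[s [_ desc]] | [s [Av_s antichain_s]]].
  exact: no_himg_descent desc.
apply: (Ngraph_free_no_antichain lt_kn); exists s; split=> // i le_N.
by apply: (Av_s i); apply: himg_le_trans (giso_himg_le iso_G) le_N.
Qed.

Theorem theorem3p4 (G : RGraph) :
  wqo_class (Av G) <-> exists n k : nat, 2 * k < n /\ giso G (Ngraph n k).
Proof.
split; first exact: Ngraph_giso_of_wqo_Av.
by move=> [n [k [lt_kn iso_G]]]; apply: wqo_Av_Ngraph lt_kn iso_G.
Qed.
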